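(* Let $m,\varepsilon>0$ and write $\widetilde{A}_k(x,t)=\widetilde{A}_k(x,t,m,\varepsilon)$. For each $(x,t)\in\varepsilon\mathbb{Z}^2$, $$\widetilde{A}_1(x,t)=\frac{1}{\sqrt{1+m^2\varepsilon^2}}\big(\widetilde{A}_1(x+\varepsilon,t-\varepsilon)+m\varepsilon\,\widetilde{A}_2(x,t-\varepsilon)\big),$$ $$\widetilde{A}_2(x,t)=\frac{1}{\sqrt{1+m^2\varepsilon^2}}\big(\widetilde{A}_2(x-\varepsilon,t-\varepsilon)-m\varepsilon\,\widetilde{A}_1(x,t-\varepsilon)\big)+2\delta_{x0}\delta_{t0}.$$
   Context: $\delta_{xy}$ is the Kronecker delta. For $\delta\in(0,1)$ let $A_k(x,t)=A_k(x,t,m,\varepsilon,\delta)$, $k\in\{1,2\}$, be the unique pair of complex-valued functions on $\{(x,t)\in\mathbb{R}^2:2x/\varepsilon,2t/\varepsilon,(x+t)/\varepsilon\in\mathbb{Z}\}$ satisfying: (1) for $2x/\varepsilon,2t/\varepsilon$ even, $A_1(x,t)=\frac{1}{\sqrt{1+m^2\varepsilon^2}}(A_1(x+\frac{\varepsilon}{2},t-\frac{\varepsilon}{2})+m\varepsilon A_2(x+\frac{\varepsilon}{2},t-\frac{\varepsilon}{2}))$ and $A_2(x,t)=\frac{1}{\sqrt{1+m^2\varepsilon^2}}(A_2(x-\frac{\varepsilon}{2},t-\frac{\varepsilon}{2})-m\varepsilon A_1(x-\frac{\varepsilon}{2},t-\frac{\varepsilon}{2}))+2\delta_{x0}\delta_{t0}$;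 (2) for $2x/\varepsilon,2t/\varepsilon$ odd, $A_1(x,t)=\frac{1}{\sqrt{1-\delta^2}}(A_1(x+\frac{\varepsilon}{2},t-\frac{\varepsilon}{2})-i\delta A_2(x+\frac{\varepsilon}{2},t-\frac{\varepsilon}{2}))$ and $A_2(x,t)=\frac{1}{\sqrt{1-\delta^2}}(A_2(x-\frac{\varepsilon}{2},t-\frac{\varepsilon}{2})+i\delta A_1(x-\frac{\varepsilon}{2},t-\frac{\varepsilon}{2}))$; (3) $\sum_{(x,t)\in\varepsilon\mathbb{Z}^2}(|A_1|^2+|A_2|^2)<\infty$ (existence and uniqueness are known). $\widetilde{A}_k(x,t,m,\varepsilon):=\lim_{\delta\searrow0}A_k(x,t,m,\varepsilon,\delta)$ for $(x,t)\in\varepsilon\mathbb{Z}^2$ (known to exist). *)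

From Stdlib Require Import Reals ZArith.
From Coquelicot Require Import Coquelicot.
Open Scope R_scope.

(* Lattice encoding: a point (x,t) of the lattice
   {2x/eps, 2t/eps, (x+t)/eps in Z} is written x = a*eps/2, t = b*eps/2 with
   a, b : Z (a+b even).  A function on the lattice is a map Z -> Z -> C
   (values at a+b odd are irrelevant and unconstrained).
   "2x/eps, 2t/eps even" <-> a, b even; "odd" <-> a, b odd. *)

Definition kron (a b : Z) : C := if Z.eq_dec a b then RtoC 1 else RtoC 0.

Definition box_sum (f : Z -> Z -> R) (N : nat) : R :=
  sum_f_R0 (fun k => sum_f_R0 (fun l =>
     f (Z.of_nat k - Z.of_nat N)%Z (Z.of_nat l - Z.of_nat N)%Z) (2 * N)) (2 * N).

Definition is_solution (m eps delta : R) (A1 A2 : Z -> Z -> C) : Prop :=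
  (forall a b : Z, Z.Even a -> Z.Even b ->
     A1 a b = (RtoC (/ sqrt (1 + m^2 * eps^2)) *
                (A1 (a + 1)%Z (b - 1)%Z + RtoC (m * eps) * A2 (a + 1)%Z (b - 1)%Z))%C /\
     A2 a b = (RtoC (/ sqrt (1 + m^2 * eps^2)) *
                (A2 (a - 1)%Z (b - 1)%Z - RtoC (m * eps) * A1 (a - 1)%Z (b - 1)%Z)
               + RtoC 2 * kron a 0 * kron b 0)%C) /\
  (forall a b : Z, Z.Odd a -> Z.Odd b ->
     A1 a b = (RtoC (/ sqrt (1 - delta^2)) *
                (A1 (a + 1)%Z (b - 1)%Z - Ci * RtoC delta * A2 (a + 1)%Z (b - 1)%Z))%C /\
     A2 a b = (RtoC (/ sqrt (1 - delta^2)) *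
                (A2 (a - 1)%Z (b - 1)%Z + Ci * RtoC delta * A1 (a - 1)%Z (b - 1)%Z))%C) /\
  (* (3): sum over (x,t) in eps Z^2, i.e. a = 2i, b = 2j, is finite *)
  (exists B : R, forall N : nat,
     box_sum (fun i j => (Cmod (A1 (2*i)%Z (2*j)%Z))^2 + (Cmod (A2 (2*i)%Z (2*j)%Z))^2) N <= B).

(** At even lattice points, one step of condition (1) followed by one step of
    condition (2) expresses (A1, A2) at (x, t) through its values at
    (x + eps, t - eps), (x, t - eps) and (x - eps, t - eps). The odd step is
    the matrix 1/sqrt(1 - delta^2) [[1, -i delta], [i delta, 1]], which tends
    to the identity as delta -> 0; since the arithmetic of C is continuous,
    the two-step identity passes to the limit, and limits are unique. *)

From Stdlib Require Import Reals ZArith Lia Lra.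
From Coquelicot Require Import Coquelicot.
Open Scope R_scope.

Section ComplexLimits.
Context {T : Type} {F : (T -> Prop) -> Prop} {FF : Filter F}.

Lemma filterlim_Cplus (f g : T -> C) (a b : C) :
  filterlim f F (locally a) -> filterlim g F (locally b) ->
  filterlim (fun x => (f x + g x)%C) F (locally (a + b)%C).
Proof.
  intros Hf Hg.
  exact (filterlim_comp_2 f g (@plus C_NormedModule) Hf Hg
    (@filterlim_plus C_AbsRing C_NormedModule a b)).
Qed.

Lemma filterlim_Copp (f : T -> C) (a : C) :
  filterlim f F (locally a) -> filterlim (fun x => (- f x)%C) F (locally (- a)%C).
Proof.
  intros Hf.
  exact (filterlim_comp _ _ _ f (@opp C_NormedModule) F _ _ Hf
    (@filterlim_opp C_AbsRing C_NormedModule a)).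
Qed.

Lemma filterlim_Cminus (f g : T -> C) (a b : C) :
  filterlim f F (locally a) -> filterlim g F (locally b) ->
  filterlim (fun x => (f x - g x)%C) F (locally (a - b)%C).
Proof.
  intros Hf Hg. exact (filterlim_Cplus _ _ _ _ Hf (filterlim_Copp _ _ Hg)).
Qed.

Lemma filterlim_Cmult (f g : T -> C) (a b : C) :
  filterlim f F (locally a) -> filterlim g F (locally b) ->
  filterlim (fun x => (f x * g x)%C) F (locally (a * b)%C).
Proof.
  intros Hf Hg.
  (* [filterlim_scal] wants the scalar to converge for the [Cmod]-ball
     uniformity of [C_AbsRing] rather than the product uniformity of [C]. *)
  assert (Hf_abs : filterlim f F (@locally (AbsRing_UniformSpace C_AbsRing) a)).
  { eapply filterlim_filter_le_2; [|exact Hf].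
    intros P [e He]. apply (@locally_le_locally_norm C_AbsRing C_NormedModule).
    exists e. exact He. }
  exact (filterlim_comp_2 f g (@scal C_AbsRing C_NormedModule) Hf_abs Hg
    (@filterlim_scal C_AbsRing C_NormedModule a b)).
Qed.

Lemma filterlim_RtoC (f : T -> R) (l : R) :
  filterlim f F (locally l) -> filterlim (fun x => RtoC (f x)) F (locally (RtoC l)).
Proof.
  intros Hf. apply filterlim_locally. intros e.
  generalize (proj1 (filterlim_locally f l) Hf e). apply filter_imp.
  intros x Hx. split; [exact Hx | apply ball_center].
Qed.

End ComplexLimits.

Definition odd_step (d : R) (u v : C) : C :=
  (RtoC (/ sqrt (1 - d ^ 2)) * (u - Ci * RtoC d * v))%C.

Lemma odd_step_opp (d : R) (u v : C) :
  odd_step (- d) u v = (RtoC (/ sqrt (1 - d ^ 2)) * (u + Ci * RtoC d * v))%C.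
Proof.
  unfold odd_step. replace ((- d) ^ 2) with (d ^ 2) by ring.
  rewrite RtoC_opp. ring.
Qed.

Lemma filterlim_odd_step {T : Type} {F : (T -> Prop) -> Prop} {FF : Filter F}
    (d : T -> R) (f g : T -> C) (a b : C) :
  filterlim d F (locally 0) -> filterlim f F (locally a) -> filterlim g F (locally b) ->
  filterlim (fun x => odd_step (d x) (f x) (g x)) F (locally a).
Proof.
  intros Hd Hf Hg.
  assert (Hscale : filterlim (fun x => / sqrt (1 - d x ^ 2)) F (locally 1)).
  { assert (Hcont : continuous (fun y => / sqrt (1 - y ^ 2)) 0).
    { apply (@ex_derive_continuous R_AbsRing R_NormedModule). auto_derive.
      replace (1 + - (0 * (0 * 1))) with 1 by ring. rewrite sqrt_1. lra. }
    unfold continuous in Hcont.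
    rewrite pow_i, Rminus_0_r, sqrt_1, Rinv_1 in Hcont by lia.
    exact (filterlim_comp _ _ _ d _ F _ _ Hd Hcont). }
  assert (Hlim := filterlim_Cmult _ _ _ _ (filterlim_RtoC _ _ Hscale)
    (filterlim_Cminus _ _ _ _ Hf
      (filterlim_Cmult _ _ _ _ (filterlim_Cmult _ _ _ _ (filterlim_const Ci)
         (filterlim_RtoC _ _ Hd)) Hg))).
  replace (RtoC 1 * (a - Ci * RtoC 0 * b))%C with a in Hlim by ring.
  exact Hlim.
Qed.

Lemma kron_double (k : Z) : kron (2 * k) 0 = kron k 0.
Proof.
  unfold kron. destruct (Z.eq_dec (2 * k) 0), (Z.eq_dec k 0); reflexivity || lia.
Qed.

Section TwoStep.
Variables (m eps delta : R) (A1 A2 : Z -> Z -> C).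
Hypothesis hsol : is_solution m eps delta A1 A2.

Local Notation c := (RtoC (/ sqrt (1 + m ^ 2 * eps ^ 2))).
Local Notation me := (RtoC (m * eps)).

(* The second component of the odd step is the first one with delta -> -delta. *)
Lemma solution_odd (a b : Z) : Z.Odd a -> Z.Odd b ->
  A1 a b = odd_step delta (A1 (a + 1)%Z (b - 1)%Z) (A2 (a + 1)%Z (b - 1)%Z) /\
  A2 a b = odd_step (- delta) (A2 (a - 1)%Z (b - 1)%Z) (A1 (a - 1)%Z (b - 1)%Z).
Proof.
  intros Ha Hb. destruct hsol as [_ [Hodd _]].
  destruct (Hodd a b Ha Hb) as [E1 E2].
  rewrite odd_step_opp. split; assumption.
Qed.

Lemma solution_A1_even (i j : Z) :
  A1 (2 * i)%Z (2 * j)%Z =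
  (c * (odd_step delta (A1 (2 * (i + 1))%Z (2 * (j - 1))%Z) (A2 (2 * (i + 1))%Z (2 * (j - 1))%Z)
        + me * odd_step (- delta) (A2 (2 * i)%Z (2 * (j - 1))%Z) (A1 (2 * i)%Z (2 * (j - 1))%Z)))%C.
Proof.
  destruct hsol as [Heven _].
  destruct (Heven (2 * i)%Z (2 * j)%Z) as [E1 _]; [exists i; ring | exists j; ring |].
  destruct (solution_odd (2 * i + 1) (2 * j - 1)) as [O1 O2];
    [exists i; ring | exists (j - 1)%Z; ring |].
  rewrite E1, O1, O2.
  replace (2 * i + 1 + 1)%Z with (2 * (i + 1))%Z by ring.
  replace (2 * i + 1 - 1)%Z with (2 * i)%Z by ring.
  replace (2 * j - 1 - 1)%Z with (2 * (j - 1))%Z by ring.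
  reflexivity.
Qed.

Lemma solution_A2_even (i j : Z) :
  A2 (2 * i)%Z (2 * j)%Z =
  (c * (odd_step (- delta) (A2 (2 * (i - 1))%Z (2 * (j - 1))%Z) (A1 (2 * (i - 1))%Z (2 * (j - 1))%Z)
        - me * odd_step delta (A1 (2 * i)%Z (2 * (j - 1))%Z) (A2 (2 * i)%Z (2 * (j - 1))%Z))
   + RtoC 2 * kron i 0 * kron j 0)%C.
Proof.
  destruct hsol as [Heven _].
  destruct (Heven (2 * i)%Z (2 * j)%Z) as [_ E2]; [exists i; ring | exists j; ring |].
  destruct (solution_odd (2 * i - 1) (2 * j - 1)) as [O1 O2];
    [exists (i - 1)%Z; ring | exists (j - 1)%Z; ring |].
  rewrite E2, O1, O2, !kron_double.
  replace (2 * i - 1 + 1)%Z with (2 * i)%Z by ring.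
  replace (2 * i - 1 - 1)%Z with (2 * (i - 1))%Z by ring.
  replace (2 * j - 1 - 1)%Z with (2 * (j - 1))%Z by ring.
  reflexivity.
Qed.

End TwoStep.

Section DeltaLimit.
Variables (m eps : R) (A1 A2 : R -> Z -> Z -> C) (At1 At2 : Z -> Z -> C).
Hypothesis hsol : forall delta : R, 0 < delta < 1 -> is_solution m eps delta (A1 delta) (A2 delta).
Hypothesis hlim1 : forall i j : Z,
  filterlim (fun d => A1 d (2 * i)%Z (2 * j)%Z) (at_right 0) (locally (At1 i j)).
Hypothesis hlim2 : forall i j : Z,
  filterlim (fun d => A2 d (2 * i)%Z (2 * j)%Z) (at_right 0) (locally (At2 i j)).

Local Notation c := (RtoC (/ sqrt (1 + m ^ 2 * eps ^ 2))).
Local Notation me := (RtoC (m * eps)).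

Lemma filterlim_at_right_0 : filterlim (fun d => d) (at_right 0) (locally 0).
Proof. apply filter_le_within. Qed.

Lemma filterlim_at_right_0_opp : filterlim (fun d => - d) (at_right 0) (locally 0).
Proof.
  assert (H := filterlim_comp _ _ _ _ Ropp _ _ _ filterlim_at_right_0
    (@filterlim_opp R_AbsRing R_NormedModule 0)).
  change (opp 0) with (- 0) in H. rewrite Ropp_0 in H. exact H.
Qed.

Lemma solution_at_right_0 : at_right 0 (fun d => is_solution m eps d (A1 d) (A2 d)).
Proof.
  exists (mkposreal 1 Rlt_0_1). intros d Hd Hpos. apply hsol.
  apply Rabs_lt_between in Hd. unfold minus, plus, opp in Hd; simpl in Hd. lra.
Qed.

Lemma filterlim_A1_even (i j : Z) :
  filterlim (fun d => A1 d (2 * i)%Z (2 * j)%Z) (at_right 0)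
    (locally (c * (At1 (i + 1)%Z (j - 1)%Z + me * At2 i (j - 1)%Z))%C).
Proof.
  eapply filterlim_ext_loc.
  - generalize solution_at_right_0. apply filter_imp. intros d Hd.
    symmetry. apply solution_A1_even, Hd.
  - apply filterlim_Cmult; [apply filterlim_const |].
    apply filterlim_Cplus.
    + eapply filterlim_odd_step; [exact filterlim_at_right_0 | apply hlim1 | apply hlim2].
    + apply filterlim_Cmult; [apply filterlim_const |].
      eapply filterlim_odd_step; [exact filterlim_at_right_0_opp | apply hlim2 | apply hlim1].
Qed.

Lemma filterlim_A2_even (i j : Z) :
  filterlim (fun d => A2 d (2 * i)%Z (2 * j)%Z) (at_right 0)
    (locally (c * (At2 (i - 1)%Z (j - 1)%Z - me * At1 i (j - 1)%Z)
              + RtoC 2 * kron i 0 * kron j 0)%C).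
Proof.
  eapply filterlim_ext_loc.
  - generalize solution_at_right_0. apply filter_imp. intros d Hd.
    symmetry. apply solution_A2_even, Hd.
  - apply filterlim_Cplus; [| apply filterlim_const].
    apply filterlim_Cmult; [apply filterlim_const |].
    apply filterlim_Cminus.
    + eapply filterlim_odd_step; [exact filterlim_at_right_0_opp | apply hlim2 | apply hlim1].
    + apply filterlim_Cmult; [apply filterlim_const |].
      eapply filterlim_odd_step; [exact filterlim_at_right_0 | apply hlim1 | apply hlim2].
Qed.

End DeltaLimit.

Theorem proposition4 (m eps : R) (hm : 0 < m) (heps : 0 < eps)
  (A1 A2 : R -> Z -> Z -> C) (At1 At2 : Z -> Z -> C)
  (hsol : forall delta : R, 0 < delta < 1 -> is_solution m eps delta (A1 delta) (A2 delta))
  (hlim1 : forall i j : Z,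
     filterlim (fun d => A1 d (2*i)%Z (2*j)%Z) (at_right 0) (locally (At1 i j)))
  (hlim2 : forall i j : Z,
     filterlim (fun d => A2 d (2*i)%Z (2*j)%Z) (at_right 0) (locally (At2 i j))) :
  forall i j : Z,
    At1 i j = (RtoC (/ sqrt (1 + m^2 * eps^2)) *
                (At1 (i + 1)%Z (j - 1)%Z + RtoC (m * eps) * At2 i (j - 1)%Z))%C /\
    At2 i j = (RtoC (/ sqrt (1 + m^2 * eps^2)) *
                (At2 (i - 1)%Z (j - 1)%Z - RtoC (m * eps) * At1 i (j - 1)%Z)
               + RtoC 2 * kron i 0 * kron j 0)%C.
Proof.
  intros i j. split.
  - apply (filterlim_locally_unique _ _ _ (hlim1 i j)).
    eapply filterlim_A1_even; eassumption.
  - apply (filterlim_locally_unique _ _ _ (hlim2 i j)).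
    eapply filterlim_A2_even; eassumption.
Qed.
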